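(* Let $\alpha\subset\mathbb{Z}^2$ be a finite set of dimension $2$ with some of its sides marked. Then $\alpha$ is a marked B-polygon if and only if, after an affine unimodular transformation of $\mathbb{Z}^2$ (carrying marked sides to marked sides), one of the following holds: (1) ($B_1$-marked polygon) there is a marked side $G$ of $\alpha$ such that exactly one point of $\alpha$ lies outside the line $\operatorname{aff}(G)$, and it has lattice distance $1$ from that line; (2) ($B_2$-marked polygon) $\alpha\subset\{x_1\in\{0,1\}\}$, and both $\alpha\cap\{x_1=0\}$ and $\alpha\cap\{x_1=1\}$ are marked sides of $\alpha$; (3) (flat border marked polygon) $\alpha=\{(0,0),(a,0),(0,1),(1,1)\}$ for some integer $a>1$, and the three sides $[(0,0),(a,0)]$, $[(a,0),(1,1)]$, $[(0,1),(0,0)]$ are marked.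
   Context: A side of a finite set $\alpha\subset\mathbb{Z}^2$ of dimension $2$ is a set $\alpha\cap G$ for an edge $G$ of the convex hull of $\alpha$. $\alpha$ with a chosen set of marked sides is a marked B-polygon if for every triangle $S$ (three affinely independent points) with vertices in $\alpha$ there is a marked side $G$ of $\alpha$ such that two vertices of $S$ lie in $G$ and the third vertex has lattice distance $1$ from the line $\operatorname{aff}(G)$ (lattice distance: absolute value of the primitive integral affine function vanishing on that line). *)

From HB Require Import structures.
From mathcomp Require Import all_boot all_order all_algebra.
From mathcomp Require Import finmap.
Set Implicit Arguments. Unset Strict Implicit. Unset Printing Implicit Defensive.
Import Order.TTheory GRing.Theory Num.Theory.
Local Open Scope ring_scope.
Local Open Scope fset_scope.

Definition pt := (int * int)%type.

Definition affz (a b c : int) (p : pt) : int := a * p.1 + b * p.2 + c.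

Definition det3 (p q r : pt) : int :=
  (q.1 - p.1) * (r.2 - p.2) - (q.2 - p.2) * (r.1 - p.1).

Definition aff_indep (p q r : pt) : Prop := det3 p q r != 0.

Definition dim2 (alpha : {fset pt}) : Prop :=
  exists p q r, [/\ p \in alpha, q \in alpha, r \in alpha & aff_indep p q r].

(* G is a side of alpha: G = alpha ∩ E for an edge E of conv(alpha), i.e.
   G is the set of points of alpha on a supporting line of alpha,
   and it contains at least two points (so the face is an edge). *)
Definition is_side (alpha G : {fset pt}) : Prop :=
  exists a b c : int,
    [/\ (a != 0) || (b != 0),
        (forall p, p \in alpha -> 0 <= affz a b c p),
        G = [fset p in alpha | affz a b c p == 0] &
        (1 < #|` G|)%N].

(* p has lattice distance k from the line aff(G) (G has >= 2 points, so the
   primitive integral affine function vanishing on aff(G) is unique up to sign) *)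
Definition lattice_dist (G : {fset pt}) (p : pt) (k : int) : Prop :=
  exists a b c : int,
    [/\ gcdz a b = 1,
        (forall q, q \in G -> affz a b c q = 0) &
        `|affz a b c p| = k].

(* marked B-polygon: M is the set of marked sides *)
Definition marked_B_polygon (alpha : {fset pt}) (M : {fset {fset pt}}) : Prop :=
  forall p q r, p \in alpha -> q \in alpha -> r \in alpha -> aff_indep p q r ->
    exists2 G, G \in M &
      [\/ [/\ p \in G, q \in G & lattice_dist G r 1],
          [/\ p \in G, r \in G & lattice_dist G q 1] |
          [/\ q \in G, r \in G & lattice_dist G p 1]].

Definition aff_map (a b c d e f : int) (p : pt) : pt :=
  ((a * p.1 + b * p.2 + e)%R, (c * p.1 + d * p.2 + f)%R).

Definition unimodular (a b c d : int) : Prop :=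
  (a * d - b * c = 1) \/ (a * d - b * c = -1).

Definition img_set (T : pt -> pt) (A : {fset pt}) : {fset pt} :=
  [fset T x | x in A].

Definition img_marks (T : pt -> pt) (M : {fset {fset pt}}) : {fset {fset pt}} :=
  [fset img_set T G | G in M].

Definition B1_marked (alpha : {fset pt}) (M : {fset {fset pt}}) : Prop :=
  exists2 G, G \in M &
    exists p, alpha `\` G = [fset p] /\ lattice_dist G p 1.

Definition B2_marked (alpha : {fset pt}) (M : {fset {fset pt}}) : Prop :=
  [/\ (forall p, p \in alpha -> (p.1 == 0) || (p.1 == 1)),
      [fset p in alpha | p.1 == 0] \in M &
      [fset p in alpha | p.1 == 1] \in M].

Definition flat_border_marked (alpha : {fset pt}) (M : {fset {fset pt}}) : Prop :=
  exists a : int,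
    [/\ 1 < a,
        alpha = [fset (0, 0); (a, 0); (0, 1); (1, 1)],
        [fset (0, 0); (a, 0)] \in M,
        [fset (a, 0); (1, 1)] \in M &
        [fset (0, 1); (0, 0)] \in M].

From HB Require Import structures.
From mathcomp Require Import all_boot all_order all_algebra.
From mathcomp Require Import finmap.
From mathcomp Require Import zify ring lra.
Import Order.TTheory GRing.Theory Num.Theory.
Local Open Scope fset_scope.
Local Open Scope ring_scope.

(* Both the B-property and the three normal forms are invariant under unimodular affine
   maps, and each of the three model polygons is checked directly to be a marked B-polygon.

   Conversely, take a triangle [w u v] of maximal area in alpha.  The B-property gives a
   marked side G through, say, [u] and [v] with [w] at lattice distance 1 from aff(G).  The
   area of [s u v] is proportional to the lattice distance of [s] from aff(G), so maximality
   puts every point of alpha at distance at most 1, and G being a side puts them all on the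
   side of [w].  A unimodular map then moves alpha into the strip {x1 = 0} U {x1 = 1}, with G
   as the level {x1 = 0}.  If the level {x1 = 1} is a single point, alpha is B1; if it is a
   marked side, alpha is B2.  Otherwise a triangle with one vertex on {x1 = 0} and two on
   {x1 = 1} can only be covered by a marked side crossing the strip, and such a side joins
   the lowest, or the highest, points of the two levels.  Hence alpha consists of these four
   extreme points, the upper two being at distance 1: a flat border polygon, or a B2-polygon
   when the lower two are at distance 1 as well. *)

Section Images.
Implicit Types (T : pt -> pt) (A G : {fset pt}) (M : {fset {fset pt}}).

Lemma img_setP T A y : reflect (exists2 x, x \in A & y = T x) (y \in img_set T A).
Proof. exact: imfsetP. Qed.

Lemma img_set_f T A x : x \in A -> T x \in img_set T A.
Proof. exact: in_imfset. Qed.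

Lemma img_marksP T M H :
  reflect (exists2 G, G \in M & H = img_set T G) (H \in img_marks T M).
Proof. exact: imfsetP. Qed.

Lemma img_marks_f T M G : G \in M -> img_set T G \in img_marks T M.
Proof. exact: in_imfset. Qed.

Lemma mem_img_set T A x : injective T -> (T x \in img_set T A) = (x \in A).
Proof. by move=> injT; rewrite /img_set mem_imfset. Qed.

Lemma card_img_set T A : injective T -> #|` img_set T A| = #|` A|.
Proof. by move=> injT; apply: card_in_imfset => x y _ _; apply: injT. Qed.

Lemma img_set_comp T1 T2 A : img_set T2 (img_set T1 A) = img_set (T2 \o T1) A.
Proof. by rewrite /img_set -imfset_comp. Qed.

Lemma eq_img_set T1 T2 A : T1 =1 T2 -> img_set T1 A = img_set T2 A.
Proof. by move=> eqT; apply: eq_imfset. Qed.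

Lemma img_set_id T A : T =1 id -> img_set T A = A.
Proof. by move=> /eq_img_set ->; rewrite /img_set imfset_id. Qed.

Lemma img_marks_comp T1 T2 M :
  img_marks T2 (img_marks T1 M) = img_marks (T2 \o T1) M.
Proof.
rewrite /img_marks -imfset_comp; apply: eq_imfset => // G.
exact: img_set_comp.
Qed.

Lemma eq_img_marks T1 T2 M : T1 =1 T2 -> img_marks T1 M = img_marks T2 M.
Proof. by move=> eqT; apply: eq_imfset => // G; apply: eq_img_set. Qed.

Lemma img_marks_id T M : T =1 id -> img_marks T M = M.
Proof.
move=> idT; rewrite -[RHS]imfset_id /img_marks.
by apply: eq_imfset => // G; apply: img_set_id.
Qed.

Lemma img_set1 T x : img_set T [fset x] = [fset T x].
Proof. exact: imfset_fset1. Qed.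

Lemma img_setU T A B : img_set T (A `|` B) = img_set T A `|` img_set T B.
Proof. exact: imfsetU. Qed.

End Images.

(** * Unimodular affine maps *)

Lemma unimodular_sqr {a b c d : int} : unimodular a b c d -> (a * d - b * c) ^+ 2 = 1.
Proof. by case=> ->; rewrite ?sqrrN expr1n. Qed.

Lemma unimodular_comp a1 b1 c1 d1 a2 b2 c2 d2 :
  unimodular a1 b1 c1 d1 -> unimodular a2 b2 c2 d2 ->
  unimodular (a2 * a1 + b2 * c1) (a2 * b1 + b2 * d1)
             (c2 * a1 + d2 * c1) (c2 * b1 + d2 * d1).
Proof.
rewrite /unimodular.
have -> : (a2 * a1 + b2 * c1) * (c2 * b1 + d2 * d1)
          - (a2 * b1 + b2 * d1) * (c2 * a1 + d2 * c1)
        = (a2 * d2 - b2 * c2) * (a1 * d1 - b1 * c1) by ring.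
by case=> ->; case=> ->; rewrite ?mulr1 ?mulN1r ?opprK; [left|right|right|left].
Qed.

Lemma aff_map_comp a1 b1 c1 d1 e1 f1 a2 b2 c2 d2 e2 f2 :
  aff_map a2 b2 c2 d2 e2 f2 \o aff_map a1 b1 c1 d1 e1 f1 =1
  aff_map (a2 * a1 + b2 * c1) (a2 * b1 + b2 * d1)
          (c2 * a1 + d2 * c1) (c2 * b1 + d2 * d1)
          (a2 * e1 + b2 * f1 + e2) (c2 * e1 + d2 * f1 + f2).
Proof. by case=> x1 x2; rewrite /aff_map /=; congr pair; ring. Qed.

(* The inverse of [x |-> A x + v] is [x |-> det A * adj A (x - v)], as [det A = 1 / det A]. *)
Lemma aff_map_inverse a b c d e f : unimodular a b c d ->
  exists a' b' c' d' e' f', unimodular a' b' c' d' /\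
    cancel (aff_map a b c d e f) (aff_map a' b' c' d' e' f').
Proof.
move=> unimod; set D := a * d - b * c.
have D2 : D * D = 1 by rewrite -expr2 unimodular_sqr.
exists (D * d), (- (D * b)), (- (D * c)), (D * a),
  (- (D * d * e - D * b * f)), (- (- (D * c) * e + D * a * f)); split.
  rewrite /unimodular (_ : _ * _ - _ * _ = D * D * D); first by rewrite D2 mul1r.
  by rewrite /D; ring.
case=> x1 x2; rewrite /aff_map /=; congr pair.
  by transitivity (D * D * x1); [rewrite /D; ring | rewrite D2 mul1r].
by transitivity (D * D * x2); [rewrite /D; ring | rewrite D2 mul1r].
Qed.

Lemma aff_map_inj {a b c d : int} (e f : int) :
  unimodular a b c d -> injective (aff_map a b c d e f).
Proof. by case/(@aff_map_inverse _ _ _ _ e f)=> [? [? [? [? [? [? [_ /can_inj]]]]]]]. Qed.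

Lemma det3_aff_map a b c d e f p q r :
  det3 (aff_map a b c d e f p) (aff_map a b c d e f q) (aff_map a b c d e f r)
  = (a * d - b * c) * det3 p q r.
Proof. by rewrite /det3 /aff_map /=; ring. Qed.

Lemma affz_aff_map a b c d e f a' b' c' x :
  affz a' b' c' (aff_map a b c d e f x) =
  affz (a' * a + b' * c) (a' * b + b' * d) (a' * e + b' * f + c') x.
Proof. by rewrite /affz /aff_map /=; ring. Qed.

Section UnimodularPreimage.
Context {a b c d e f : int}.
Hypothesis unimodT : unimodular a b c d.
Local Notation T := (aff_map a b c d e f).

Lemma pullback_linear_inv a' b' :
  a' = (a * d - b * c) * (d * (a' * a + b' * c) - c * (a' * b + b' * d)) /\
  b' = (a * d - b * c) * (a * (a' * b + b' * d) - b * (a' * a + b' * c)).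
Proof.
have D2 := unimodular_sqr unimodT.
by split; [transitivity ((a * d - b * c) ^+ 2 * a') |
           transitivity ((a * d - b * c) ^+ 2 * b')]; try ring; by rewrite D2 mul1r.
Qed.

Lemma gcdz_pullback a' b' : gcdz a' b' = 1 ->
  gcdz (a' * a + b' * c) (a' * b + b' * d) = 1.
Proof.
move=> g1; set g := gcdz _ _.
have gX : (g %| (a' * a + b' * c)%R)%Z by apply: dvdz_gcdl.
have gY : (g %| (a' * b + b' * d)%R)%Z by apply: dvdz_gcdr.
have [ea eb] := pullback_linear_inv a' b'.
have ga : (g %| a')%Z by rewrite ea dvdz_mull // rpredB // dvdz_mull.
have gb : (g %| b')%Z by rewrite eb dvdz_mull // rpredB // dvdz_mull.
have : (g %| gcdz a' b')%Z by rewrite dvdz_gcd ga gb.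
by rewrite g1 dvdz1 /g /gcdz absz_nat => /eqP ->.
Qed.

Lemma lattice_dist_preimage G r k :
  lattice_dist (img_set T G) (T r) k -> lattice_dist G r k.
Proof.
case=> [a' [b' [c' [g1 vanish dist]]]].
exists (a' * a + b' * c), (a' * b + b' * d), (a' * e + b' * f + c').
split; [exact: gcdz_pullback | move=> q Gq | ]; rewrite -affz_aff_map //.
exact/vanish/img_set_f.
Qed.

Lemma is_side_preimage A G : is_side (img_set T A) (img_set T G) -> is_side A G.
Proof.
case=> [a' [b' [c' [nz supp eqG card]]]].
have injT := aff_map_inj e f unimodT.
exists (a' * a + b' * c), (a' * b + b' * d), (a' * e + b' * f + c'); split.
- apply: contraTT nz; rewrite negb_or !negbK => /andP [/eqP X0 /eqP Y0].
  move: (pullback_linear_inv a' b'); rewrite X0 Y0 !mulr0 => -[-> ->].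
  by rewrite eqxx.
- by move=> p Ap; rewrite -affz_aff_map; apply/supp/img_set_f.
- apply/fsetP => x; rewrite -(mem_img_set _ _ _ injT) eqG !inE mem_img_set //.
  by rewrite affz_aff_map.
- by rewrite -(@card_img_set T G injT).
Qed.

Lemma aff_indep_img p q r : aff_indep p q r -> aff_indep (T p) (T q) (T r).
Proof.
move=> indep; rewrite /aff_indep det3_aff_map mulf_neq0 //.
by case: unimodT => ->.
Qed.

Lemma marked_B_polygon_preimage alpha M :
  marked_B_polygon (img_set T alpha) (img_marks T M) -> marked_B_polygon alpha M.
Proof.
move=> BT p q r Ap Aq Ar indep.
have injT := aff_map_inj e f unimodT.
have [_ /img_marksP [G MG ->] cover] := BT _ _ _ (img_set_f T _ _ Ap)
  (img_set_f T _ _ Aq) (img_set_f T _ _ Ar) (aff_indep_img _ _ _ indep).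
exists G => //; move: cover; rewrite !mem_img_set //.
by case=> -[G1 G2 /lattice_dist_preimage dist]; [apply: Or31 | apply: Or32 | apply: Or33].
Qed.

End UnimodularPreimage.

Lemma marked_B_polygon_img a b c d e f alpha M : unimodular a b c d ->
  marked_B_polygon alpha M ->
  marked_B_polygon (img_set (aff_map a b c d e f) alpha)
                   (img_marks (aff_map a b c d e f) M).
Proof.
case/(@aff_map_inverse _ _ _ _ e f) => [a' [b' [c' [d' [e' [f' [unimod' K]]]]]]].
move=> BA; apply: (@marked_B_polygon_preimage _ _ _ _ e' f' unimod').
by rewrite img_set_comp img_marks_comp (@img_set_id _ alpha K) (@img_marks_id _ M K).
Qed.

Lemma is_side_img a b c d e f A G : unimodular a b c d ->
  is_side A G -> is_side (img_set (aff_map a b c d e f) A) (img_set (aff_map a b c d e f) G).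
Proof.
case/(@aff_map_inverse _ _ _ _ e f) => [a' [b' [c' [d' [e' [f' [unimod' K]]]]]]].
move=> SA; apply: (@is_side_preimage _ _ _ _ e' f' unimod').
by rewrite !img_set_comp (@img_set_id _ A K) (@img_set_id _ G K).
Qed.

Definition B_normal_form (alpha : {fset pt}) (M : {fset {fset pt}}) : Prop :=
  exists (a b c d e f : int), unimodular a b c d /\
    let T := aff_map a b c d e f in
    [\/ B1_marked (img_set T alpha) (img_marks T M),
        B2_marked (img_set T alpha) (img_marks T M) |
        flat_border_marked (img_set T alpha) (img_marks T M)].

Lemma B_normal_form_id alpha M :
  [\/ B1_marked alpha M, B2_marked alpha M | flat_border_marked alpha M] ->
  B_normal_form alpha M.
Proof.
have id1 : aff_map 1 0 0 1 0 0 =1 id by case=> x y; rewrite /aff_map /=; congr pair; ring.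
move=> H; exists 1, 0, 0, 1, 0, 0; split; first by left; rewrite mulr1 mulr0 subr0.
by rewrite /= (@img_set_id _ alpha id1) (@img_marks_id _ M id1).
Qed.

Lemma B_normal_form_preimage a b c d e f alpha M : unimodular a b c d ->
  B_normal_form (img_set (aff_map a b c d e f) alpha) (img_marks (aff_map a b c d e f) M) ->
  B_normal_form alpha M.
Proof.
move=> unimod1 [a2 [b2 [c2 [d2 [e2 [f2 [unimod2 H]]]]]]].
move: H; rewrite /= img_set_comp img_marks_comp.
rewrite (eq_img_set _ _ _ (aff_map_comp _ _ _ _ _ _ _ _ _ _ _ _))
        (eq_img_marks _ _ _ (aff_map_comp _ _ _ _ _ _ _ _ _ _ _ _)) => H.
do 6 eexists; split; last exact: H.
exact: unimodular_comp.
Qed.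

(** * The model polygons are marked B-polygons *)

Lemma aff_indep_neq {p q r : pt} : aff_indep p q r -> [/\ p != q, p != r & q != r].
Proof.
by move=> indep; split; apply: contraNneq indep => ->; apply/eqP; rewrite /det3; ring.
Qed.

Lemma det3_affz {a b c : int} (s : pt) {u v : pt} : affz a b c u = 0 -> affz a b c v = 0 ->
  a * det3 s u v = - (v.2 - u.2) * affz a b c s /\
  b * det3 s u v = (v.1 - u.1) * affz a b c s.
Proof.
rewrite /affz /det3 => fu fv.
have -> : c = - (a * u.1 + b * u.2) by lra.
have lin : a * (v.1 - u.1) + b * (v.2 - u.2) = 0 by lra.
split.
  by transitivity (- (v.2 - u.2) * (a * s.1 + b * s.2 - (a * u.1 + b * u.2))
                   - (u.2 - s.2) * (a * (v.1 - u.1) + b * (v.2 - u.2)));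
    [ring | rewrite lin mulr0 subr0].
by transitivity ((v.1 - u.1) * (a * s.1 + b * s.2 - (a * u.1 + b * u.2))
                 + (u.1 - s.1) * (a * (v.1 - u.1) + b * (v.2 - u.2)));
  [ring | rewrite lin mulr0 addr0].
Qed.

Lemma det3_affz_eq0 {a b c : int} {p q r : pt} : (a != 0) || (b != 0) ->
  affz a b c p = 0 -> affz a b c q = 0 -> affz a b c r = 0 -> det3 p q r = 0.
Proof.
move=> nz fp fq fr; have [ea eb] := det3_affz p fq fr; rewrite fp !mulr0 in ea eb.
by case/orP: nz => nz; apply: (mulfI nz); rewrite mulr0.
Qed.

Lemma lattice_dist_vline G k x :
  (forall y, y \in G -> y.1 = k) -> `|x.1 - k| = 1 -> lattice_dist G x 1.
Proof.
move=> onG dx; exists 1, 0, (- k); split; first by rewrite /gcdz gcd1n.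
  by move=> y /onG yk; rewrite /affz yk; ring.
by rewrite /affz mul1r mul0r addr0.
Qed.

Definition side_covered (M : {fset {fset pt}}) (p q r : pt) : Prop :=
  exists2 G, G \in M &
    [\/ [/\ p \in G, q \in G & lattice_dist G r 1],
        [/\ p \in G, r \in G & lattice_dist G q 1] |
        [/\ q \in G, r \in G & lattice_dist G p 1]].

Lemma side_covered_perm {M : {fset {fset pt}}} {G : {fset pt}} {p q r : pt} :
  G \in M -> p \in G -> q \in G -> lattice_dist G r 1 ->
  [/\ side_covered M p q r, side_covered M q p r & side_covered M p r q] /\
  [/\ side_covered M r p q, side_covered M q r p & side_covered M r q p].
Proof.
by move=> MG Gp Gq dr; do 2 split; exists G => //;
  [apply: Or31 | apply: Or31 | apply: Or32 | apply: Or33 | apply: Or32 | apply: Or33].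
Qed.

Lemma B1_marked_B_polygon alpha M : B1_marked alpha M -> marked_B_polygon alpha M.
Proof.
move=> [G MG [s [outG ds]]] p q r Ap Aq Ar indep.
have [a [b [c [g1 onG _]]]] := ds.
have nz : (a != 0) || (b != 0) by rewrite -negb_and -gcdz_eq0 g1.
have outside x : x \in alpha -> x \notin G -> x = s.
  by move=> Ax nGx; apply/fset1P; rewrite -outG inE nGx.
have [pq pr qr] := aff_indep_neq indep.
case: (boolP (p \in G)) => Gp; case: (boolP (q \in G)) => Gq;
  case: (boolP (r \in G)) => Gr.
- by move: indep; rewrite /aff_indep (det3_affz_eq0 nz (onG _ Gp) (onG _ Gq) (onG _ Gr)).
- by exists G => //; apply: Or31; rewrite (outside r Ar Gr).
- by exists G => //; apply: Or32; rewrite (outside q Aq Gq).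
- by move: qr; rewrite (outside q Aq Gq) (outside r Ar Gr) eqxx.
- by exists G => //; apply: Or33; rewrite (outside p Ap Gp).
- by move: pr; rewrite (outside p Ap Gp) (outside r Ar Gr) eqxx.
- by move: pq; rewrite (outside p Ap Gp) (outside q Aq Gq) eqxx.
- by move: pq; rewrite (outside p Ap Gp) (outside q Aq Gq) eqxx.
Qed.

Definition level (alpha : {fset pt}) (k : int) : {fset pt} := [fset x in alpha | x.1 == k].

Lemma levelP alpha k x : reflect (x \in alpha /\ x.1 = k) (x \in level alpha k).
Proof. by rewrite !inE; apply: (iffP andP) => -[Ax /eqP]. Qed.

Lemma B2_marked_B_polygon alpha M : B2_marked alpha M -> marked_B_polygon alpha M.
Proof.
move=> [levels M0 M1] p q r Ap Aq Ar indep.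
have onL k x : x \in alpha -> x.1 = k -> x \in level alpha k by move=> Ax xk; apply/levelP.
have d0 x : x.1 = 1 -> lattice_dist (level alpha 0) x 1.
  by move=> x1; apply: (@lattice_dist_vline _ 0) => [y /levelP [] | ]; rewrite ?x1.
have d1 x : x.1 = 0 -> lattice_dist (level alpha 1) x 1.
  by move=> x0; apply: (@lattice_dist_vline _ 1) => [y /levelP [] | ]; rewrite ?x0.
case/orP: (levels p Ap) => /eqP p1; case/orP: (levels q Aq) => /eqP q1;
  case/orP: (levels r Ar) => /eqP r1.
- by move: indep; rewrite /aff_indep (_ : det3 p q r = 0) // /det3 p1 q1 r1; ring.
- by case: (side_covered_perm M0 (onL _ _ Ap p1) (onL _ _ Aq q1) (d0 _ r1))
    => -[? ? ?] [? ? ?].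
- by case: (side_covered_perm M0 (onL _ _ Ap p1) (onL _ _ Ar r1) (d0 _ q1))
    => -[? ? ?] [? ? ?].
- by case: (side_covered_perm M1 (onL _ _ Aq q1) (onL _ _ Ar r1) (d1 _ p1))
    => -[? ? ?] [? ? ?].
- by case: (side_covered_perm M0 (onL _ _ Aq q1) (onL _ _ Ar r1) (d0 _ p1))
    => -[? ? ?] [? ? ?].
- by case: (side_covered_perm M1 (onL _ _ Ap p1) (onL _ _ Ar r1) (d1 _ q1))
    => -[? ? ?] [? ? ?].
- by case: (side_covered_perm M1 (onL _ _ Ap p1) (onL _ _ Aq q1) (d1 _ r1))
    => -[? ? ?] [? ? ?].
- by move: indep; rewrite /aff_indep (_ : det3 p q r = 0) // /det3 p1 q1 r1; ring.
Qed.

Lemma flat_border_marked_B_polygon alpha M :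
  flat_border_marked alpha M -> marked_B_polygon alpha M.
Proof.
move=> [a [a_gt1 -> Mbot Mslant Mleft]].
have d_bot x : x.2 = 1 -> lattice_dist [fset (0, 0); (a, 0)] x 1.
  move=> x2; exists 0, 1, 0; split; rewrite /affz ?x2 ?mul0r //.
  by move=> y /[!inE] /orP [] /eqP -> /=; ring.
have d_left : lattice_dist [fset (0, 1); (0, 0)] (1, 1) 1.
  by apply: (@lattice_dist_vline _ 0) => // y /[!inE] /orP [] /eqP ->.
have d_slant : lattice_dist [fset (a, 0); (1, 1)] (0, 1) 1.
  exists 1, (a - 1), (- a); split; first by rewrite /gcdz gcd1n.
    by move=> y /[!inE] /orP [] /eqP ->; rewrite /affz /=; ring.
  by rewrite /affz /= (_ : _ + _ = -1) //; ring.
move: (side_covered_perm Mbot (fset21 _ _) (fset22 _ _) (d_bot (0, 1) erefl)) => -[[? ? ?] [? ? ?]].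
move: (side_covered_perm Mbot (fset21 _ _) (fset22 _ _) (d_bot (1, 1) erefl)) => -[[? ? ?] [? ? ?]].
move: (side_covered_perm Mleft (fset21 _ _) (fset22 _ _) d_left) => -[[? ? ?] [? ? ?]].
move: (side_covered_perm Mslant (fset21 _ _) (fset22 _ _) d_slant) => -[[? ? ?] [? ? ?]].
move=> p q r; rewrite !inE.
by move=> /orP [/orP [/orP [] |] |] /eqP -> /orP [/orP [/orP [] |] |] /eqP ->
          /orP [/orP [/orP [] |] |] /eqP -> indep //;
  case: (aff_indep_neq indep); rewrite eqxx.
Qed.

(** * Marked B-polygons in a strip of width one *)

Definition in_strip (alpha : {fset pt}) : Prop :=
  forall y, y \in alpha -> (y.1 == 0) || (y.1 == 1).

Definition lowest (alpha : {fset pt}) (x : pt) : Prop :=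
  forall y, y \in alpha -> y.1 = x.1 -> x.2 <= y.2.

Definition highest (alpha : {fset pt}) (x : pt) : Prop :=
  forall y, y \in alpha -> y.1 = x.1 -> y.2 <= x.2.

Definition co_extremal (alpha : {fset pt}) (x y : pt) : Prop :=
  lowest alpha x /\ lowest alpha y \/ highest alpha x /\ highest alpha y.

Lemma seq_argmin {T : eqType} (phi : T -> int) {s : seq T} {x0 : T} : x0 \in s ->
  exists2 x, x \in s & forall y, y \in s -> phi x <= phi y.
Proof.
elim: s x0 => // a [|b s] IH x0 _.
  by exists a; rewrite ?mem_head // => y /[!inE] /eqP ->.
have [x xs xmin] := IH b (mem_head _ _).
have [ax|xa] := lerP (phi a) (phi x).
  exists a; first exact: mem_head.
  by move=> y /[!inE] /orP [/eqP -> // | /xmin]; apply: le_trans.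
exists x; first by rewrite inE xs orbT.
by move=> y /[!inE] /orP [/eqP -> | /xmin //]; apply: ltW.
Qed.

Lemma exists_lowest {alpha : {fset pt}} {x : pt} : x \in alpha ->
  exists b, [/\ b \in alpha, b.1 = x.1 & lowest alpha b].
Proof.
move=> Ax; have Lx : x \in level alpha x.1 by apply/levelP.
have [b /levelP [Ab bx] bmin] := seq_argmin (fun y : pt => y.2) Lx.
by exists b; split => // y Ay yb; apply/bmin/levelP; rewrite yb.
Qed.

Lemma exists_highest {alpha : {fset pt}} {x : pt} : x \in alpha ->
  exists t, [/\ t \in alpha, t.1 = x.1 & highest alpha t].
Proof.
move=> Ax; have Lx : x \in level alpha x.1 by apply/levelP.
have [t /levelP [At tx] tmax] := seq_argmin (fun y : pt => - y.2) Lx.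
by exists t; split => // y Ay yt; rewrite -lerN2; apply/tmax/levelP; rewrite yt.
Qed.

Lemma lowest_uniq {alpha : {fset pt}} {x y : pt} : x \in alpha -> y \in alpha -> x.1 = y.1 ->
  lowest alpha x -> lowest alpha y -> x = y.
Proof.
move=> Ax Ay xy lx ly; apply: injective_projections => //.
by apply/eqP; rewrite eq_le lx ?ly.
Qed.

Lemma highest_uniq {alpha : {fset pt}} {x y : pt} : x \in alpha -> y \in alpha -> x.1 = y.1 ->
  highest alpha x -> highest alpha y -> x = y.
Proof.
move=> Ax Ay xy hx hy; apply: injective_projections => //.
by apply/eqP; rewrite eq_le hx ?hy.
Qed.

Lemma lowest_highest_eq {alpha : {fset pt}} {x y b : pt} : x \in alpha -> y \in alpha ->
  x.1 = b.1 -> y.1 = b.1 -> lowest alpha b -> highest alpha b -> x = y.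
Proof.
move=> Ax Ay xb yb lb hb.
have /eqP x2 : x.2 == b.2 by rewrite eq_le hb ?lb.
have /eqP y2 : y.2 == b.2 by rewrite eq_le hb ?lb.
by apply: injective_projections; rewrite ?xb ?yb ?x2 ?y2.
Qed.

Lemma side_level {alpha H : {fset pt}} {k : int} {t1 t2 : pt} :
  is_side alpha H -> t1 \in H -> t2 \in H -> t1.1 = k -> t2.1 = k -> t1 != t2 -> H = level alpha k.
Proof.
move=> [a [b [c [nz _ -> _]]]] /[!inE] /andP [_ /eqP f1] /andP [_ /eqP f2] t1k t2k.
move=> /eqP t12; have {}t12 : t1.2 != t2.2.
  by apply/eqP => e; apply: t12; apply: injective_projections; rewrite ?t1k ?t2k.
move: f1 f2; rewrite /affz t1k t2k => f1 f2.
have /eqP : b * (t1.2 - t2.2) = 0 by rewrite mulrBr; lra.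
rewrite mulf_eq0 subr_eq0 (negbTE t12) orbF => /eqP b0.
rewrite b0 eqxx orbF in nz; rewrite b0 in f1.
have -> : c = - (a * k) by lra.
apply/fsetP => y; rewrite !inE /affz b0.
by rewrite (_ : _ + _ = a * (y.1 - k)) ?mulf_eq0 ?(negbTE nz) ?subr_eq0 //; ring.
Qed.

Lemma side_across_strip {alpha H : {fset pt}} {b t : pt} : in_strip alpha -> is_side alpha H ->
  b \in H -> t \in H -> b.1 = 0 -> t.1 = 1 ->
  H = [fset b; t] /\ co_extremal alpha b t.
Proof.
move=> strip [a [a2 [c [nz supp -> _]]]].
move=> /[!inE] /andP [Ab /eqP fb] /andP [At /eqP ft] b0 t1.
have f0 y : y.1 = 0 -> affz a a2 c y = a2 * (y.2 - b.2).
  move: fb; rewrite /affz b0 => fb ->.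
  have -> : c = - (a2 * b.2) by lra.
  ring.
have f1 y : y.1 = 1 -> affz a a2 c y = a2 * (y.2 - t.2).
  move: ft; rewrite /affz t1 => ft ->.
  have -> : c = - (a + a2 * t.2) by lra.
  ring.
have a2_neq0 : a2 != 0.
  apply: contraTneq nz => a2_0; move: fb ft; rewrite /affz b0 t1 a2_0 => fb ft.
  by rewrite negb_or negbK eqxx andbT; apply/eqP; lra.
split.
  apply/fsetP => y; rewrite !inE; apply/andP/orP => [[Ay /eqP fy]|].
    have fy0 d : a2 * (y.2 - d) = 0 -> y.2 = d.
      by move/eqP; rewrite mulf_eq0 (negbTE a2_neq0) subr_eq0 => /eqP.
    by case/orP: (strip y Ay) => /eqP y1; [left|right]; apply/eqP;
      apply: injective_projections; rewrite ?y1 ?b0 ?t1 //; apply: fy0;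
      rewrite -?f0 -?f1.
  by case=> /eqP ->; rewrite ?Ab ?At ?fb ?ft.
have [a2_neg|a2_pos|] := ltrgtP a2 0; last by move/eqP: a2_neq0.
  right; split=> y Ay; [rewrite b0 => /f0 | rewrite t1 => /f1] => fy;
    by have := supp y Ay; rewrite fy; nra.
left; split=> y Ay; [rewrite b0 => /f0 | rewrite t1 => /f1] => fy;
  by have := supp y Ay; rewrite fy; nra.
Qed.

Lemma lattice_dist_across {H : {fset pt}} {b t t' : pt} : b \in H -> t \in H ->
  b.1 = 0 -> t.1 = 1 -> t'.1 = 1 -> lattice_dist H t' 1 -> `|t'.2 - t.2| = 1.
Proof.
move=> Hb Ht b0 t1 t'1 [a [a2 [c [g1 onH dist]]]].
move: (onH _ Hb) (onH _ Ht) dist; rewrite /affz b0 t1 t'1 => fb ft dist.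
have ea : a = a2 * (b.2 - t.2) by lra.
have : (a2 %| gcdz a a2)%Z by rewrite dvdz_gcd ea dvdz_mulr ?dvdzz.
rewrite g1 dvdz1 => /eqP a2_unit.
have ft' : a * 1 + a2 * t'.2 + c = a2 * (t'.2 - t.2) by rewrite ea; lra.
by move: dist; rewrite ft' normrM -(abszE a2) a2_unit mul1r.
Qed.

Lemma det3_across b t t' : b.1 = 0 -> t.1 = 1 -> t'.1 = 1 -> det3 b t t' = t'.2 - t.2.
Proof. by rewrite /det3 => -> -> ->; ring. Qed.

Lemma four_point_normal_form alpha M b b' t t' :
  alpha = [fset b; b'; t; t'] -> b.1 = 0 -> b'.1 = 0 -> t.1 = 1 -> t'.1 = 1 ->
  b.2 < b'.2 -> t'.2 = t.2 + 1 ->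
  [fset b; b'] \in M -> [fset b; t] \in M -> [fset b'; t'] \in M ->
  B_normal_form alpha M.
Proof.
move=> -> b0 b'0 t1 t'1 bb' tt' Mbot Mleft Mright.
pose k := b'.2 - b.2; pose T := aff_map (b.2 - t.2) 1 1 0 (- b.2) 0.
have unimodT : unimodular (b.2 - t.2) 1 1 0 by right; ring.
have Tx x : T x = ((b.2 - t.2) * x.1 + x.2 - b.2, x.1).
  by rewrite /T /aff_map; congr pair; ring.
have [Tb Tb' Tt Tt'] : [/\ T b = (0, 0), T b' = (k, 0), T t = (0, 1) & T t' = (1, 1)].
  by rewrite !Tx b0 b'0 t1 t'1 tt'; split; congr pair; rewrite /k; ring.
have img2 x y : img_set T [fset x; y] = [fset T x; T y] by rewrite img_setU !img_set1.
apply: (@B_normal_form_preimage _ _ _ _ (- b.2) 0 _ _ unimodT); rewrite -/T.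
apply: B_normal_form_id; rewrite !img_setU !img_set1 Tb Tb' Tt Tt'.
have [k1|k_gt1] : k = 1 \/ 1 < k by rewrite /k; lia.
  apply: Or32; split.
  - by move=> p; rewrite k1 !inE => /orP [/orP [/orP [] |] |] /eqP ->.
  - rewrite (_ : [fset _ in _ | _] = img_set T [fset b; t]); first exact: img_marks_f.
    by rewrite img2 Tb Tt k1; apply/fsetP => -[x y]; rewrite !inE !xpair_eqE /=; lia.
  - rewrite (_ : [fset _ in _ | _] = img_set T [fset b'; t']); first exact: img_marks_f.
    by rewrite img2 Tb' Tt' k1; apply/fsetP => -[x y]; rewrite !inE !xpair_eqE /=; lia.
apply: Or33; exists k; split => //.
- by rewrite -Tb -Tb' -img2; apply: img_marks_f.
- by rewrite -Tb' -Tt' -img2; apply: img_marks_f.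
- by rewrite -Tt -Tb fsetUC -img2; apply: img_marks_f.
Qed.

Section StripPolygon.
Variables (alpha : {fset pt}) (M : {fset {fset pt}}).
Hypothesis strip : in_strip alpha.
Hypothesis sides : forall G, G \in M -> is_side alpha G.
Hypothesis Bpoly : marked_B_polygon alpha M.

Lemma edge_across {b t t' : pt} : level alpha 1 \notin M ->
  b \in alpha -> t \in alpha -> t' \in alpha -> b.1 = 0 -> t.1 = 1 -> t'.1 = 1 ->
  t != t' ->
  exists2 G, G \in M &
    [/\ G = [fset b; t], lattice_dist G t' 1 & co_extremal alpha b t] \/
    [/\ G = [fset b; t'], lattice_dist G t 1 & co_extremal alpha b t'].
Proof.
move=> top Ab At At' b0 t1 t'1 tt'.
have indep : aff_indep b t t'.
  rewrite /aff_indep det3_across // subr_eq0; apply: contra tt' => /eqP e.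
  by apply/eqP/injective_projections; rewrite ?t1 ?t'1.
have [G MG cover] := Bpoly _ _ _ Ab At At' indep; exists G => //.
case: cover => [[Gb Gt dt']|[Gb Gt' dt]|[Gt Gt' _]].
- by have [? ?] := side_across_strip strip (sides _ MG) Gb Gt b0 t1; left; split.
- by have [? ?] := side_across_strip strip (sides _ MG) Gb Gt' b0 t'1; right; split.
- (* a side through [t] and [t'] would be the unmarked level [x1 = 1] *)
  by move: top; rewrite -(side_level (sides _ MG) Gt Gt' t1 t'1 tt') MG.
Qed.

Section UnmarkedTop.
Hypothesis top : level alpha 1 \notin M.
Context {bmin bmax tmin tmax : pt}.
Hypotheses (Abmin : bmin \in alpha) (Abmax : bmax \in alpha).
Hypotheses (Atmin : tmin \in alpha) (Atmax : tmax \in alpha).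
Hypotheses (bmin0 : bmin.1 = 0) (bmax0 : bmax.1 = 0).
Hypotheses (tmin1 : tmin.1 = 1) (tmax1 : tmax.1 = 1).
Hypotheses (lbmin : lowest alpha bmin) (hbmax : highest alpha bmax).
Hypotheses (ltmin : lowest alpha tmin) (htmax : highest alpha tmax).
Hypotheses (bmin_bmax : bmin != bmax) (tmin_tmax : tmin != tmax).

Let not_highest_bmin : ~ highest alpha bmin.
Proof.
move=> hbmin; move/eqP: bmin_bmax; apply.
by apply: (highest_uniq Abmin Abmax); rewrite ?bmin0 ?bmax0.
Qed.

Let not_lowest_bmax : ~ lowest alpha bmax.
Proof.
move=> lbmax; move/eqP: bmin_bmax; apply.
by apply: (lowest_uniq Abmin Abmax); rewrite ?bmin0 ?bmax0.
Qed.

Let not_highest_tmin : ~ highest alpha tmin.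
Proof.
move=> htmin; move/eqP: tmin_tmax; apply.
by apply: (highest_uniq Atmin Atmax); rewrite ?tmin1 ?tmax1.
Qed.

Let not_lowest_tmax : ~ lowest alpha tmax.
Proof.
move=> ltmax; move/eqP: tmin_tmax; apply.
by apply: (lowest_uniq Atmin Atmax); rewrite ?tmin1 ?tmax1.
Qed.

Let lowest_of_bmin s : co_extremal alpha bmin s -> lowest alpha s.
Proof. by case=> [[]|[/not_highest_bmin]]. Qed.

Let highest_of_bmax s : co_extremal alpha bmax s -> highest alpha s.
Proof. by case=> [[/not_lowest_bmax]|[]]. Qed.

Lemma level0_extremes y : y \in alpha -> y.1 = 0 -> y = bmin \/ y = bmax.
Proof.
move=> Ay y0; have [ly|hy] : lowest alpha y \/ highest alpha y.
  have [G _ [[_ _ ext]|[_ _ ext]]] :=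
    edge_across top Ay Atmin Atmax y0 tmin1 tmax1 tmin_tmax;
  by case: ext => -[]; tauto.
- by left; apply: (lowest_uniq Ay Abmin); rewrite ?y0 ?bmin0.
- by right; apply: (highest_uniq Ay Abmax); rewrite ?y0 ?bmax0.
Qed.

Lemma level1_extremes y : y \in alpha -> y.1 = 1 -> y = tmin \/ y = tmax.
Proof.
move=> Ay y1; have [->|y_tmax] := eqVneq y tmax; [by right | left].
have [G _ [[_ _ /lowest_of_bmin ly]|[_ _ /lowest_of_bmin /not_lowest_tmax []]]] :=
  edge_across top Abmin Ay Atmax bmin0 y1 tmax1 y_tmax.
by apply: (lowest_uniq Ay Atmin); rewrite ?y1 ?tmin1.
Qed.

Lemma strip_four_points : alpha = [fset bmin; bmax; tmin; tmax].
Proof.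
apply/fsetP => y; rewrite !inE; apply/idP/idP => [Ay|].
  case/orP: (strip _ Ay) => /eqP y_lvl;
    [case: (level0_extremes _ Ay y_lvl) | case: (level1_extremes _ Ay y_lvl)];
    by move=> ->; rewrite eqxx ?orbT.
by move=> /orP [/orP [/orP [] |] |] /eqP ->.
Qed.

Lemma low_edge : [fset bmin; tmin] \in M /\ tmax.2 = tmin.2 + 1.
Proof.
have [G MG [[GE dist _]|[_ _ /lowest_of_bmin /not_lowest_tmax []]]] :=
  edge_across top Abmin Atmin Atmax bmin0 tmin1 tmax1 tmin_tmax.
rewrite -GE; split => //.
have unit_gap : `|tmax.2 - tmin.2| = 1.
  by apply: (lattice_dist_across _ _ bmin0 tmin1 tmax1 dist); rewrite GE !inE eqxx ?orbT.
have : tmin.2 <= tmax.2 by apply: ltmin; rewrite ?tmin1.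
by move: unit_gap; lia.
Qed.

Lemma high_edge : [fset bmax; tmax] \in M.
Proof.
by have [G MG [[_ _ /highest_of_bmax /not_highest_tmin []]|[<- _ _]]] :=
  edge_across top Abmax Atmin Atmax bmax0 tmin1 tmax1 tmin_tmax.
Qed.

Lemma unmarked_top_normal_form : level alpha 0 \in M -> B_normal_form alpha M.
Proof.
move=> B0; have [Mleft tmax_tmin] := low_edge; have Mright := high_edge.
have bmin_lt_bmax : bmin.2 < bmax.2.
  have le_b : bmin.2 <= bmax.2 by apply: lbmin; rewrite ?bmin0 ?bmax0.
  rewrite lt_neqAle le_b andbT; apply: contra bmin_bmax => /eqP b2.
  by apply/eqP/injective_projections; rewrite ?bmin0 ?bmax0.
apply: (@four_point_normal_form _ _ bmin bmax tmin tmax strip_four_points) => //.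
rewrite (_ : [fset _; _] = level alpha 0) //; apply/fsetP => y.
apply/idP/levelP => [/[!inE] /orP [] /eqP -> | [Ay y0]]; try by split.
by rewrite !inE; case: (level0_extremes _ Ay y0) => ->; rewrite eqxx ?orbT.
Qed.

End UnmarkedTop.

Lemma single_top_normal_form t0 : level alpha 0 \in M -> level alpha 1 = [fset t0] ->
  B_normal_form alpha M.
Proof.
move=> B0 single; have /levelP [_ t01] : t0 \in level alpha 1 by rewrite single fset11.
apply/B_normal_form_id/Or31; exists (level alpha 0) => //; exists t0; split.
  apply/fsetP => y; rewrite -single !inE.
  by have [Ay|] := boolP (y \in alpha); rewrite ?andbF //=; case/orP: (strip _ Ay) => /eqP ->.
by apply: (@lattice_dist_vline _ 0) => [y /levelP [] //|]; rewrite t01.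
Qed.

Lemma strip_normal_form b1 b2 t0 : level alpha 0 \in M ->
  b1 \in alpha -> b2 \in alpha -> b1.1 = 0 -> b2.1 = 0 -> b1 != b2 ->
  t0 \in alpha -> t0.1 = 1 -> B_normal_form alpha M.
Proof.
move=> B0 Ab1 Ab2 b10 b20 b12 At0 t01.
have L1t0 : t0 \in level alpha 1 by apply/levelP.
have [single|not_single] := eqVneq (level alpha 1) [fset t0].
  exact: (single_top_normal_form _ B0 single).
have [Mtop|top] := boolP (level alpha 1 \in M); first by apply/B_normal_form_id/Or32; split.
have /fsubsetPn [t1 /levelP [At1 t11]] : ~~ (level alpha 1 `<=` [fset t0]).
  by apply: contra not_single => sub; rewrite eqEfsubset sub fsub1set.
rewrite inE => t1t0.
have [bmin [Abmin bmin0 lbmin]] := exists_lowest Ab1.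
have [bmax [Abmax bmax0 hbmax]] := exists_highest Ab1.
have [tmin [Atmin tmin1 ltmin]] := exists_lowest At0.
have [tmax [Atmax tmax1 htmax]] := exists_highest At0.
rewrite b10 in bmin0 bmax0; rewrite t01 in tmin1 tmax1.
have bmin_bmax : bmin != bmax.
  apply: contra b12 => /eqP bE; rewrite -bE in hbmax; apply/eqP.
  by apply: (lowest_highest_eq Ab1 Ab2 _ _ lbmin hbmax); rewrite ?b10 ?b20 ?bmin0.
have tmin_tmax : tmin != tmax.
  apply: contra t1t0 => /eqP tE; rewrite -tE in htmax; apply/eqP.
  by apply: (lowest_highest_eq At1 At0 _ _ ltmin htmax); rewrite ?t11 ?t01 ?tmin1.
exact: (@unmarked_top_normal_form top bmin bmax tmin tmax).
Qed.

End StripPolygon.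

(** * Triangles of maximal area *)

Lemma det3_rotate p q r : det3 r p q = det3 p q r.
Proof. by rewrite /det3; ring. Qed.

Lemma det3_swap p q r : det3 q p r = - det3 p q r.
Proof. by rewrite /det3; ring. Qed.

Lemma side_sub {alpha G : {fset pt}} {x : pt} : is_side alpha G -> x \in G -> x \in alpha.
Proof. by case=> [a [b [c [_ _ -> _]]]] /[!inE] /andP []. Qed.

Lemma primitive_unimodular {a b : int} : gcdz a b = 1 -> exists c d, unimodular a b c d.
Proof.
move=> g1; have [u [v uv]] := Bezoutz a b.
by exists (- v), u; left; rewrite -g1 -uv; ring.
Qed.

Lemma det3_primitive {a b c : int} {u v : pt} : gcdz a b = 1 ->
  affz a b c u = 0 -> affz a b c v = 0 ->
  exists K, forall s, det3 s u v = K * affz a b c s.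
Proof.
move=> g1 fu fv; have [x [y xy]] := Bezoutz a b; rewrite g1 in xy.
exists (y * (v.1 - u.1) - x * (v.2 - u.2)) => s.
have [ea eb] := det3_affz s fu fv.
transitivity (x * (a * det3 s u v) + y * (b * det3 s u v)).
  by rewrite !mulrA -mulrDl xy mul1r.
by rewrite ea eb; ring.
Qed.

Lemma det3_sign_side {a b c : int} {u v s w : pt} : (a != 0) || (b != 0) ->
  affz a b c u = 0 -> affz a b c v = 0 ->
  0 <= affz a b c s -> 0 <= affz a b c w -> 0 <= det3 s u v * det3 w u v.
Proof.
move=> nz fu fv fs fw.
have [as_ bs] := det3_affz s fu fv; have [aw bw] := det3_affz w fu fv.
suff key k d : k != 0 ->
    k * k * (det3 s u v * det3 w u v) = d ^+ 2 * (affz a b c s * affz a b c w) ->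
    0 <= det3 s u v * det3 w u v.
  case/orP: nz => nz; [apply: (key _ (v.2 - u.2) nz) | apply: (key _ (v.1 - u.1) nz)].
    by transitivity ((a * det3 s u v) * (a * det3 w u v)); [ring | rewrite as_ aw; ring].
  by transitivity ((b * det3 s u v) * (b * det3 w u v)); [ring | rewrite bs bw; ring].
move=> k0 E; have k2 : 0 < k * k by rewrite lt0r mulf_neq0 //= -expr2 sqr_ge0.
by rewrite -(pmulr_rge0 _ k2) E mulr_ge0 ?sqr_ge0 ?mulr_ge0.
Qed.

Lemma det3_eq0_affz {a b c : int} {u v s : pt} : u != v ->
  affz a b c u = 0 -> affz a b c v = 0 -> det3 s u v = 0 -> affz a b c s = 0.
Proof.
move=> uv fu fv Ds; have [ea eb] := det3_affz s fu fv; rewrite Ds !mulr0 in ea eb.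
have [v2u2|v2u2] := eqVneq (v.2 - u.2) 0.
  have v1u1 : v.1 - u.1 != 0.
    apply: contra uv => /eqP v1u1; apply/eqP/injective_projections; lra.
  by apply/eqP; move/eqP: eb; rewrite eq_sym mulf_eq0 (negbTE v1u1).
by apply/eqP; move/eqP: ea; rewrite eq_sym mulNr oppr_eq0 mulf_eq0 (negbTE v2u2).
Qed.

Lemma max_triangle_strip {alpha G : {fset pt}} {u v w : pt} :
  is_side alpha G -> u \in G -> v \in G -> w \in alpha -> det3 w u v != 0 ->
  lattice_dist G w 1 -> (forall s, s \in alpha -> `|det3 s u v| <= `|det3 w u v|) ->
  exists a b c, [/\ gcdz a b = 1, affz a b c w = 1,
    forall s, s \in alpha -> (affz a b c s == 0) || (affz a b c s == 1) &
    forall s, s \in alpha -> (affz a b c s == 0) = (s \in G)].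
Proof.
move=> sideG Gu Gv Aw Dw [a [b [c [g1 fG fw]]]] wmax.
have [a' [b' [c' [nz supp eqG _]]]] := sideG.
have gG x : x \in G -> affz a' b' c' x = 0 by rewrite eqG inE => /andP [_ /eqP].
have [K DK] := det3_primitive g1 (fG _ Gu) (fG _ Gv).
have K_neq0 : K != 0 by apply: contraNneq Dw => K0; rewrite DK K0 mul0r.
have [_ _ uv] := aff_indep_neq Dw.
set eps := affz a b c w in fw *.
have eps_unit : eps = 1 \/ eps = -1 by lia.
have eps2 : eps * eps = 1 by case: eps_unit => ->.
have f_eps s : affz (eps * a) (eps * b) (eps * c) s = eps * affz a b c s.
  by rewrite /affz; ring.
exists (eps * a), (eps * b), (eps * c); split.
- by rewrite -mulz_gcdr g1 mulr1 abszE fw.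
- by rewrite f_eps.
- move=> s As; rewrite f_eps.
  have bound : `|affz a b c s| <= 1.
    have := wmax s As; rewrite !DK !normrM fw mulr1 -[leRHS]mulr1.
    by rewrite ler_pM2l ?normr_gt0.
  have sign : 0 <= eps * affz a b c s.
    have := det3_sign_side nz (gG _ Gu) (gG _ Gv) (supp _ As) (supp _ Aw).
    rewrite !DK -/eps (_ : _ * _ = K * K * (eps * affz a b c s)); last by ring.
    by rewrite pmulr_rge0 // lt0r mulf_neq0 //= -expr2 sqr_ge0.
  by move: bound sign; case: eps_unit => ->; lia.
- move=> s As; rewrite f_eps mulf_eq0 (_ : (eps == 0) = false) /=; last first.
    by case: eps_unit => ->.
  apply/idP/idP => [/eqP fs | /fG -> //].
  rewrite eqG !inE; apply/andP; split => //; apply/eqP.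
  by apply: (det3_eq0_affz uv (gG _ Gu) (gG _ Gv)); rewrite DK fs mulr0.
Qed.

Lemma max_triangle_normal_form {alpha G : {fset pt}} {M : {fset {fset pt}}} {u v w : pt} :
  (forall H, H \in M -> is_side alpha H) -> marked_B_polygon alpha M ->
  G \in M -> u \in G -> v \in G -> w \in alpha -> det3 w u v != 0 ->
  lattice_dist G w 1 ->
  (forall s, s \in alpha -> `|det3 s u v| <= `|det3 w u v|) ->
  B_normal_form alpha M.
Proof.
move=> sides Bpoly MG Gu Gv Aw Dw dw wmax.
have sideG := sides _ MG.
have [a [b [c [g1 fw strip zeroG]]]] := max_triangle_strip sideG Gu Gv Aw Dw dw wmax.
have [d [e unimodT]] := primitive_unimodular g1.
pose T := aff_map a b d e c 0.
have injT : injective T := aff_map_inj c 0 unimodT.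
have T1 s : (T s).1 = affz a b c s by [].
have [_ _ uv] := aff_indep_neq Dw.
have [Au Av] := (side_sub sideG Gu, side_sub sideG Gv).
apply: (@B_normal_form_preimage _ _ _ _ c 0 _ _ unimodT); rewrite -/T.
apply: (@strip_normal_form _ _ _ _ _ (T u) (T v) (T w)).
- by move=> _ /img_setP [s As ->]; rewrite T1 strip.
- by move=> _ /img_marksP [H MH ->]; apply/is_side_img/sides.
- exact: marked_B_polygon_img.
- rewrite (_ : level _ 0 = img_set T G); first exact: img_marks_f.
  apply/fsetP => y; apply/levelP/img_setP => [[/img_setP [s As ->]] | [s Gs ->]].
    by rewrite T1 => /eqP; rewrite zeroG // => Gs; exists s.
  have As := side_sub sideG Gs.
  by split; [apply: img_set_f | apply/eqP; rewrite T1 zeroG].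
- exact: img_set_f.
- exact: img_set_f.
- by apply/eqP; rewrite T1 zeroG.
- by apply/eqP; rewrite T1 zeroG.
- by rewrite (inj_eq injT).
- exact: img_set_f.
- by rewrite T1.
Qed.

Lemma exists_max_triangle {alpha : {fset pt}} {p0 q0 r0 : pt} :
  p0 \in alpha -> q0 \in alpha -> r0 \in alpha ->
  exists p q r, [/\ p \in alpha, q \in alpha, r \in alpha &
    forall x y z, x \in alpha -> y \in alpha -> z \in alpha ->
      `|det3 x y z| <= `|det3 p q r|].
Proof.
move=> Ap0 Aq0 Ar0.
pose triples := [seq (xy, z) | xy <- [seq (x, y) | x <- alpha, y <- alpha], z <- alpha].
have in_triples x y z : x \in alpha -> y \in alpha -> z \in alpha -> ((x, y), z) \in triples.
  by move=> Ax Ay Az; apply: allpairs_f => //; apply: allpairs_f.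
have [t /allpairsP [[pq r] [/allpairsP [[p q] [Ap Aq ->]] Ar ->]] t_max]
  := seq_argmin (fun t => - `|det3 t.1.1 t.1.2 t.2|) (in_triples _ _ _ Ap0 Aq0 Ar0).
exists p, q, r; split => // x y z Ax Ay Az.
by have := t_max ((x, y), z) (in_triples _ _ _ Ax Ay Az); rewrite /= lerN2.
Qed.

Theorem lemma4p4 (alpha : {fset pt}) (M : {fset {fset pt}}) :
  dim2 alpha ->
  (forall G, G \in M -> is_side alpha G) ->
  marked_B_polygon alpha M <->
  exists (a b c d e f : int), unimodular a b c d /\
    let T := aff_map a b c d e f in
    [\/ B1_marked (img_set T alpha) (img_marks T M),
        B2_marked (img_set T alpha) (img_marks T M) |
        flat_border_marked (img_set T alpha) (img_marks T M)].
Proof.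
move=> [p0 [q0 [r0 [Ap0 Aq0 Ar0 indep0]]]] sides; split; last first.
  move=> [a [b [c [d [e [f [unimod nf]]]]]]].
  apply: (@marked_B_polygon_preimage _ _ _ _ e f unimod).
  by case: nf => [/B1_marked_B_polygon | /B2_marked_B_polygon | /flat_border_marked_B_polygon].
move=> Bpoly; have [p [q [r [Ap Aq Ar pqr_max]]]] := exists_max_triangle Ap0 Aq0 Ar0.
have indep : det3 p q r != 0.
  by rewrite -normr_gt0 (lt_le_trans _ (pqr_max _ _ _ Ap0 Aq0 Ar0)) ?normr_gt0.
have [G MG [[Gp Gq dr] | [Gp Gr dq] | [Gq Gr dp]]] := Bpoly _ _ _ Ap Aq Ar indep.
- have Dr : det3 r p q != 0 by rewrite det3_rotate.
  apply: (max_triangle_normal_form sides Bpoly MG Gp Gq Ar Dr dr) => s As.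
  by rewrite (det3_rotate p q r); apply: pqr_max.
- have Dq : det3 q p r != 0 by rewrite det3_swap oppr_eq0.
  apply: (max_triangle_normal_form sides Bpoly MG Gp Gr Aq Dq dq) => s As.
  by rewrite (det3_swap p q r) normrN; apply: pqr_max.
- apply: (max_triangle_normal_form sides Bpoly MG Gq Gr Ap indep dp) => s As.
  exact: pqr_max.
Qed.
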